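(* Let $G=(V,E)$ be a finite graph with special vertex $i$, symmetric edge weights $w_E$ (with $w_E(u,v)=0$ for $uv\notin E$) and vertex weights $w_V$ (nonnegative, not identically zero), such that $G$ and $G-i$ are each positively connected. Let $f_i$ be a solution of $$\min_{\|g\|_w=1,\ g(i)=0}\ \sum_{jk\in E} w_E(j,k)\,(g(k)-g(j))^2,$$ positive on $V\setminus\{i\}$. Fix vertices $j,k$ with $jk\in E$ such that $G-j$ is not connected and $i$ and $k$ lie in different components of $G-j$, and suppose $w_V(k)>0$. Then $j$ is the unique vertex $z\in N(k)$ satisfying $f_i(z)=\min_{z'\in N(k)}f_i(z')$.
   Context: $\|g\|_w=\sqrt{\sum_{u\in V}w_V(u)g(u)^2}$; each edge is counted once. A weighted graph is positively connected if any two vertices are joined by a path of positive-weight edges; $G-x$ is $G$ with vertex $x$ deleted. Edges of weight zero are regarded as deleted, so neighborhoods $N(u)$, the edge $jk$, and connectivity refer to positive-weight edges. *)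

From mathcomp Require Import all_boot all_order all_algebra.
From mathcomp Require Import reals.
Set Implicit Arguments. Unset Strict Implicit. Unset Printing Implicit Defensive.
Import Order.TTheory GRing.Theory Num.Theory.
Local Open Scope ring_scope.

Section Defs.
Variables (R : realType) (V : finType).

Definition pos_edge_in (wE : V -> V -> R) (S : {set V}) : rel V :=
  fun x y => [&& x \in S, y \in S & 0 < wE x y].

Definition pos_connected_on (wE : V -> V -> R) (S : {set V}) : Prop :=
  forall x y, x \in S -> y \in S -> connect (pos_edge_in wE S) x y.

Definition nbhd (wE : V -> V -> R) (u : V) : {set V} := [set z | 0 < wE u z].

Definition wnorm (wV : V -> R) (g : V -> R) : R :=
  Num.sqrt (\sum_(u : V) wV u * g u ^+ 2).

(* Dirichlet energy, each (unordered) edge counted once: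
   with wE symmetric and wE x x = 0, this is half of the ordered double sum *)
Definition energy (wE : V -> V -> R) (g : V -> R) : R :=
  2^-1 * \sum_(x : V) \sum_(y : V) wE x y * (g y - g x) ^+ 2.

Definition is_minimizer (wE : V -> V -> R) (wV : V -> R) (i : V) (f : V -> R) : Prop :=
  [/\ wnorm wV f = 1, f i = 0 &
      forall g : V -> R, wnorm wV g = 1 -> g i = 0 -> energy wE f <= energy wE g].
End Defs.

From mathcomp Require Import all_boot all_order all_algebra.
From mathcomp Require Import reals ring lra.
Set Implicit Arguments.
Unset Strict Implicit.
Unset Printing Implicit Defensive.

Import Order.TTheory GRing.Theory Num.Theory.
Local Open Scope ring_scope.

(* Varying the minimizer f along the indicator of a vertex u <> i gives the
   Euler-Lagrange equation (L f)(u) = lambda w_V(u) f(u), where L is the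
   weighted graph Laplacian and lambda = energy f > 0 because G is connected.
   Hence L f >= 0 on the component D of k in G - j, which avoids i, and
   L f > 0 at k since w_V(k) > 0.  If f attained its minimum over D ∪ {j} at a
   vertex of D, then L f <= 0 there would force all its neighbours to share
   the minimal value; this spreads through D up to k, a contradiction.  So
   f(j) < f on D, and N(k) is contained in D ∪ {j} and contains j. *)

Lemma quadratic_ge0_lin_eq0 (R : realFieldType) (a b : R) :
  (forall t, 0 <= a * t + b * t ^+ 2) -> a = 0.
Proof.
move=> H; set c := (`|b| + 1)^-1.
have c_gt0 : 0 < c by rewrite invr_gt0 ltr_wpDl.
have c_inv : c * (`|b| + 1) = 1 by rewrite mulVf // gt_eqF // ltr_wpDl.
(* at t = - a c the quadratic is a^2 c (b c - 1) <= - (a c)^2 *)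
have Hc := H (- a * c).
have b_le : 0 <= a ^+ 2 * c * (`|b| - b).
  by rewrite mulr_ge0 ?subr_ge0 ?ler_norm // mulr_ge0 ?sqr_ge0 ?ltW.
have : (a * c) ^+ 2 == 0 by rewrite eq_le sqr_ge0 andbT; nra.
by rewrite expf_eq0 /= mulf_eq0 (gt_eqF c_gt0) orbF => /eqP.
Qed.

Lemma sum_mul_indicator (R : ringType) (V : finType) (F : V -> R) (u : V) :
  \sum_v F v * (v == u)%:R = F u.
Proof.
rewrite (bigD1 u) //= eqxx mulr1 big1 ?addr0 // => v /negbTE ->.
by rewrite mulr0.
Qed.

Lemma pos_edge_in_sym (R : realType) (V : finType) (wE : V -> V -> R) S :
  (forall x y, wE x y = wE y x) -> symmetric (pos_edge_in wE S).
Proof.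
by move=> wE_sym x y; rewrite /pos_edge_in wE_sym; case: (x \in S); case: (y \in S).
Qed.

Section Dirichlet.
Variables (R : realType) (V : finType) (wE : V -> V -> R).

Definition dirichlet (g h : V -> R) : R :=
  2^-1 * \sum_x \sum_y wE x y * ((g y - g x) * (h y - h x)).

Definition laplacian (g : V -> R) (u : V) : R := \sum_y wE u y * (g u - g y).

Lemma energy_shift g h t :
  energy wE (fun u => g u + t * h u) =
  energy wE g + 2 * t * dirichlet g h + t ^+ 2 * energy wE h.
Proof.
rewrite /energy /dirichlet.
have -> : \sum_x \sum_y wE x y * (g y + t * h y - (g x + t * h x)) ^+ 2 =
    \sum_x \sum_y wE x y * (g y - g x) ^+ 2
    + 2 * t * \sum_x \sum_y wE x y * ((g y - g x) * (h y - h x))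
    + t ^+ 2 * \sum_x \sum_y wE x y * (h y - h x) ^+ 2.
  rewrite !mulr_sumr -!big_split; apply: eq_bigr => x _.
  by rewrite !mulr_sumr -!big_split; apply: eq_bigr => y _ /=; ring.
by ring.
Qed.

Lemma energyZ c g : energy wE (fun u => c * g u) = c ^+ 2 * energy wE g.
Proof.
rewrite /energy [RHS]mulrCA; congr (_ * _); rewrite mulr_sumr; apply: eq_bigr => x _.
by rewrite mulr_sumr; apply: eq_bigr => y _; ring.
Qed.

Hypothesis wE_ge0 : forall x y, 0 <= wE x y.

Lemma energy_ge0 g : 0 <= energy wE g.
Proof.
rewrite /energy mulr_ge0 ?invr_ge0 ?ler0n //.
by do 2!apply: sumr_ge0 => ? _; rewrite mulr_ge0 ?sqr_ge0.
Qed.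

Lemma energy_eq0_edge g x y : energy wE g = 0 -> 0 < wE x y -> g x = g y.
Proof.
move=> /eqP; rewrite /energy mulf_eq0 invr_eq0 pnatr_eq0 /= => /eqP E0 wxy.
have term_ge0 a b : 0 <= wE a b * (g b - g a) ^+ 2 by rewrite mulr_ge0 ?sqr_ge0.
have Ex := psumr_eq0P (fun a _ => sumr_ge0 _ (fun b _ => term_ge0 a b)) E0 (i:=x) isT.
move: (psumr_eq0P (fun b _ => term_ge0 x b) Ex (i:=y) isT) => /eqP.
by rewrite mulf_eq0 gt_eqF //= expf_eq0 /= subr_eq0 => /eqP.
Qed.

Lemma energy_eq0_connect g S x y :
  energy wE g = 0 -> connect (pos_edge_in wE S) x y -> g x = g y.
Proof.
move=> E0 cxy; have cl : closed (pos_edge_in wE S) [pred v | g v == g x].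
  by move=> a b /and3P[_ _ wab]; rewrite !inE (energy_eq0_edge E0 wab).
by have := closed_connect cl cxy; rewrite !inE eqxx => /esym/eqP ->.
Qed.

Lemma laplacian_term_min_le0 g u v :
  (forall y, 0 < wE u y -> g u <= g y) -> wE u v * (g u - g v) <= 0.
Proof.
move=> umin; have := wE_ge0 u v; rewrite le_eqVlt => /orP[/eqP <-|wuv].
  by rewrite mul0r.
by apply: mulr_ge0_le0; rewrite ?subr_le0 ?umin ?ltW.
Qed.

Lemma laplacian_min_le0 g u :
  (forall y, 0 < wE u y -> g u <= g y) -> laplacian g u <= 0.
Proof.
move=> umin; rewrite -oppr_ge0 -sumrN; apply: sumr_ge0 => v _.
by rewrite oppr_ge0 laplacian_term_min_le0.
Qed.

Lemma laplacian_min_flat g u :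
  (forall y, 0 < wE u y -> g u <= g y) -> 0 <= laplacian g u ->
  forall y, 0 < wE u y -> g y = g u.
Proof.
move=> umin lap_ge0 y wuy.
have term_ge0 v : 0 <= - (wE u v * (g u - g v)).
  by rewrite oppr_ge0 laplacian_term_min_le0.
have sum0 : \sum_v - (wE u v * (g u - g v)) = 0.
  by rewrite sumrN; apply/eqP; rewrite oppr_eq0 eq_le lap_ge0 laplacian_min_le0.
move: (psumr_eq0P (fun v _ => term_ge0 v) sum0 (i:=y) isT) => /eqP.
by rewrite oppr_eq0 mulf_eq0 gt_eqF //= subr_eq0 => /eqP.
Qed.

Hypothesis wE_sym : forall x y, wE x y = wE y x.

Lemma dirichlet_indicator g u : dirichlet g (fun v => (v == u)%:R) = laplacian g u.
Proof.
have split_x x : \sum_y wE x y * ((g y - g x) * ((y == u)%:R - (x == u)%:R)) =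
    wE x u * (g u - g x) - (\sum_y wE x y * (g y - g x)) * (x == u)%:R.
  rewrite mulr_suml -(sum_mul_indicator (fun y => wE x y * (g y - g x))) -sumrB.
  by apply: eq_bigr => y _; ring.
rewrite /dirichlet (eq_bigr _ (fun x _ => split_x x)) sumrB sum_mul_indicator.
have -> : \sum_x wE x u * (g u - g x) = laplacian g u.
  by apply: eq_bigr => x _; rewrite wE_sym.
have -> : \sum_y wE u y * (g y - g u) = - laplacian g u.
  by rewrite -sumrN; apply: eq_bigr => y _; ring.
by rewrite opprK; field.
Qed.

End Dirichlet.

Section WeightedNorm.
Variables (R : realType) (V : finType) (wV : V -> R).

Definition wdot (g h : V -> R) : R := \sum_u wV u * (g u * h u).

Lemma wnormE g : wnorm wV g = Num.sqrt (wdot g g).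
Proof. by congr Num.sqrt; apply: eq_bigr => u _; rewrite expr2. Qed.

Lemma wnorm_eq1 g : wnorm wV g = 1 -> wdot g g = 1.
Proof.
rewrite wnormE; have [N_ge0 s1|N_lt0] := leP 0 (wdot g g).
  by rewrite -(sqr_sqrtr N_ge0) s1 expr1n.
by rewrite ltr0_sqrtr // => /eqP; rewrite eq_sym oner_eq0.
Qed.

Lemma wdot_shift g h t :
  wdot (fun u => g u + t * h u) (fun u => g u + t * h u) =
  wdot g g + 2 * t * wdot g h + t ^+ 2 * wdot h h.
Proof. by rewrite /wdot !mulr_sumr -!big_split; apply: eq_bigr => u _ /=; ring. Qed.

Lemma wdotZ c g : wdot (fun u => c * g u) (fun u => c * g u) = c ^+ 2 * wdot g g.
Proof. by rewrite /wdot mulr_sumr; apply: eq_bigr => u _; ring. Qed.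

Lemma wdot_indicator g u : wdot g (fun v => (v == u)%:R) = wV u * g u.
Proof.
rewrite -(sum_mul_indicator (fun v => wV v * g v)).
by apply: eq_bigr => v _; rewrite mulrA.
Qed.

Lemma wdot_ge0 g : (forall u, 0 <= wV u) -> 0 <= wdot g g.
Proof. by move=> wV_ge0; apply: sumr_ge0 => u _; rewrite -expr2 mulr_ge0 ?sqr_ge0. Qed.

End WeightedNorm.

Section Minimizer.
Variables (R : realType) (V : finType) (wE : V -> V -> R) (wV : V -> R).
Variables (i : V) (f : V -> R).
Hypotheses (wE_ge0 : forall x y, 0 <= wE x y) (wV_ge0 : forall u, 0 <= wV u).
Hypothesis fmin : is_minimizer wE wV i f.

Lemma minimizer_rayleigh g : g i = 0 -> energy wE f * wdot wV g g <= energy wE g.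
Proof.
move=> gi; have [->|N_neq0] := eqVneq (wdot wV g g) 0.
  by rewrite mulr0 energy_ge0.
have N_gt0 : 0 < wdot wV g g by rewrite lt_def N_neq0 wdot_ge0.
set c := (Num.sqrt (wdot wV g g))^-1.
have cN : c ^+ 2 * wdot wV g g = 1 by rewrite exprVn sqr_sqrtr ?ltW // mulVf.
case: fmin => _ _ /(_ (fun u => c * g u)).
rewrite wnormE wdotZ cN sqrtr1 gi mulr0 energyZ => /(_ erefl erefl).
by rewrite -(ler_pM2r N_gt0) (mulrAC (c ^+ 2)) cN mul1r.
Qed.

Lemma minimizer_first_variation h :
  h i = 0 -> dirichlet wE f h = energy wE f * wdot wV f h.
Proof.
move=> hi; have [/wnorm_eq1 f_unit fi _] := fmin.
suff : 2 * (dirichlet wE f h - energy wE f * wdot wV f h) = 0.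
  by move/eqP; rewrite mulf_eq0 pnatr_eq0 subr_eq0 => /eqP.
apply: (@quadratic_ge0_lin_eq0 _ _ (energy wE h - energy wE f * wdot wV h h)) => t.
have := @minimizer_rayleigh (fun u => f u + t * h u).
rewrite fi hi mulr0 addr0 energy_shift wdot_shift f_unit => /(_ erefl).
by rewrite -subr_ge0; nra.
Qed.

Lemma minimizer_energy_gt0 : pos_connected_on wE [set: V] -> 0 < energy wE f.
Proof.
move=> conG; rewrite lt_def energy_ge0 // andbT; apply/eqP => E0.
have [/wnorm_eq1 f_unit fi _] := fmin.
have f0 u : f u = 0 by rewrite -fi (energy_eq0_connect wE_ge0 E0 (conG i u _ _)) ?inE.
move: f_unit; rewrite /wdot big1 => [/eqP|u _]; first by rewrite eq_sym oner_eq0.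
by rewrite f0 !mul0r mulr0.
Qed.

Hypothesis wE_sym : forall x y, wE x y = wE y x.

Lemma minimizer_euler_lagrange u :
  u != i -> laplacian wE f u = energy wE f * (wV u * f u).
Proof.
move=> ui; rewrite -dirichlet_indicator // -wdot_indicator.
by apply: minimizer_first_variation; rewrite eq_sym (negbTE ui).
Qed.

Lemma minimizer_laplacian_ge0 u : u != i -> 0 <= f u -> 0 <= laplacian wE f u.
Proof.
move=> ui fu; rewrite minimizer_euler_lagrange //.
by rewrite mulr_ge0 ?energy_ge0 // mulr_ge0.
Qed.

Lemma minimizer_laplacian_gt0 u : pos_connected_on wE [set: V] ->
  u != i -> 0 < wV u -> 0 < f u -> 0 < laplacian wE f u.
Proof.
move=> conG ui wVu fu; rewrite minimizer_euler_lagrange //.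
by rewrite mulr_gt0 ?minimizer_energy_gt0 // mulr_gt0.
Qed.

End Minimizer.

Section MinimumPrinciple.
Variables (R : realType) (V : finType) (wE : V -> V -> R) (g : V -> R) (j k : V).
Hypotheses (wE_sym : forall x y, wE x y = wE y x) (wE_ge0 : forall x y, 0 <= wE x y).
Hypothesis k_neq_j : k != j.

Let e := pos_edge_in wE [set~ j].
Let e_csym : connect_sym e := sym_connect_sym (pos_edge_in_sym _ wE_sym).

Lemma component_neq u : connect e k u -> u != j.
Proof.
have cl : closed e [set~ j] by move=> x y /and3P[-> -> _].
by move=> /(closed_connect cl); rewrite !in_setC1 k_neq_j => <-.
Qed.

Lemma component_nbhd u y : connect e k u -> 0 < wE u y -> (y == j) || connect e k y.
Proof.
move=> cku wuy; have [//|y_neq_j /=] := eqVneq y j.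
apply: (connect_trans cku (connect1 _)).
by rewrite /e /pos_edge_in !in_setC1 (component_neq cku) y_neq_j.
Qed.

Hypothesis lap_ge0 : forall u, connect e k u -> 0 <= laplacian wE g u.
Hypothesis lap_k_gt0 : 0 < laplacian wE g k.

Let A := [pred u | (u == j) || connect e k u].

Lemma component_not_min u : connect e k u -> ~ (forall v, v \in A -> g u <= g v).
Proof.
move=> cku umin.
have min_nbhd x : connect e k x -> g x = g u -> forall y, 0 < wE x y -> g x <= g y.
  by move=> ckx -> y wxy; apply: umin; apply: component_nbhd ckx wxy.
have cl : closed e [pred x | connect e k x && (g x == g u)].
  apply: intro_closed => // x y exy /andP[ckx /eqP gx].
  rewrite inE (connect_trans ckx (connect1 exy)) -gx /=; apply/eqP.
  apply: (laplacian_min_flat wE_ge0 (min_nbhd x ckx gx) (lap_ge0 ckx)).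
  by case/and3P: exy.
have cuk : connect e u k by rewrite e_csym.
have := closed_connect cl cuk; rewrite !inE cku eqxx => /esym/andP[_ /eqP gk].
have := laplacian_min_le0 wE_ge0 (min_nbhd k (connect0 _ _) gk).
by rewrite leNgt lap_k_gt0.
Qed.

Lemma minimum_principle u : connect e k u -> g j < g u.
Proof.
have Aj : j \in A by rewrite inE eqxx.
have [u0 Au0 u0_min] := arg_minP g Aj.
have u0_j : u0 = j.
  by case/orP: Au0 => [/eqP //|cku0]; case: (component_not_min cku0 u0_min).
move=> cku; have Au : u \in A by apply/orP; right.
rewrite lt_def -u0_j u0_min // andbT.
by apply/eqP => gu; apply: (component_not_min cku) => v Av; rewrite gu u0_min.
Qed.

End MinimumPrinciple.

Theorem corollary11 (R : realType) (V : finType)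
  (wE : V -> V -> R) (wV : V -> R) (i : V) (f : V -> R) (j k : V) :
  (forall x y, wE x y = wE y x) ->
  (forall x y, 0 <= wE x y) ->
  (forall x, wE x x = 0) ->
  (forall u, 0 <= wV u) ->
  (exists u, wV u != 0) ->
  pos_connected_on wE [set: V] ->
  pos_connected_on wE [set~ i] ->
  is_minimizer wE wV i f ->
  (forall u, u != i -> 0 < f u) ->
  0 < wE j k ->
  ~ pos_connected_on wE [set~ j] ->
  i != j -> k != j ->
  ~ connect (pos_edge_in wE [set~ j]) i k ->
  0 < wV k ->
  forall z, z \in nbhd wE k ->
    ((forall z', z' \in nbhd wE k -> f z <= f z') <-> z = j).
Proof.
move=> wE_sym wE_ge0 _ wV_ge0 _ conG _ fmin f_pos wjk _ _ k_neq_j not_cik wVk.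
set e := pos_edge_in wE [set~ j].
have comp_neq_i u : connect e k u -> u != i.
  move=> cku; apply/eqP => u_i; apply: not_cik.
  by rewrite -u_i (sym_connect_sym (pos_edge_in_sym _ wE_sym)).
have lap_ge0 u : connect e k u -> 0 <= laplacian wE f u.
  move=> /comp_neq_i ui.
  exact: (minimizer_laplacian_ge0 wE_ge0 wV_ge0 fmin wE_sym ui (ltW (f_pos u ui))).
have lap_k_gt0 : 0 < laplacian wE f k.
  have ki := comp_neq_i k (connect0 _ _).
  exact: (minimizer_laplacian_gt0 wE_ge0 wV_ge0 fmin wE_sym conG ki wVk (f_pos k ki)).
have fj_lt := minimum_principle wE_sym wE_ge0 k_neq_j lap_ge0 lap_k_gt0.
have nbhd_k y : y \in nbhd wE k -> (y == j) || connect e k y.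
  by rewrite inE; exact: (component_nbhd k_neq_j (connect0 _ k)).
have j_nbhd : j \in nbhd wE k by rewrite inE wE_sym.
move=> z /nbhd_k z_nbhd; split=> [zmin | -> z' /nbhd_k /orP[/eqP -> // | ckz']].
  case/orP: z_nbhd => [/eqP // | ckz].
  by have := zmin j j_nbhd; rewrite leNgt fj_lt.
exact: ltW (fj_lt _ ckz').
Qed.
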